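(* Let $G$ be a weighted voting game on players $N=\{1,\dots,n\}$ with characteristic function $v$. Then there exists a weighted representation $[q;w_1,\dots,w_n]$ of $G$ such that for all coalitions $C\neq C'$ with $v(C)=v(C')=1$ we have $\sum_{i\in C}w_i\neq\sum_{i\in C'}w_i$.
   Context: A simple game on $N$ is a function $v:2^N\to\{0,1\}$. It is a weighted voting game if there are $q\ge0$ and $w_1,\dots,w_n\ge0$ such that for all $S\subseteq N$: $v(S)=1\iff\sum_{j\in S}w_j\ge q$; such a vector $[q;w_1,\dots,w_n]$ is a weighted representation. *)

From mathcomp Require Import all_boot all_order all_algebra.
From mathcomp Require Import reals.
Set Implicit Arguments. Unset Strict Implicit. Unset Printing Implicit Defensive.
Import Order.TTheory GRing.Theory Num.Theory.
Local Open Scope ring_scope.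

(* Players N = {1..n} are represented by 'I_n; coalitions by {set 'I_n}.
   A simple game is v : {set 'I_n} -> bool  (true = 1, false = 0). *)

Definition weighted_rep (R : realType) (n : nat) (v : {set 'I_n} -> bool)
    (q : R) (w : 'I_n -> R) : Prop :=
  0 <= q /\ (forall i, 0 <= w i) /\
  (forall S : {set 'I_n}, v S = true <-> q <= \sum_(j in S) w j).

Definition weighted_voting_game (R : realType) (n : nat)
    (v : {set 'I_n} -> bool) : Prop :=
  exists (q : R) (w : 'I_n -> R), weighted_rep v q w.

From mathcomp Require Import all_boot all_order all_algebra.
From mathcomp Require Import reals.
From mathcomp Require Import zify ring lra.
Set Implicit Arguments. Unset Strict Implicit. Unset Printing Implicit Defensive.
Import Order.TTheory GRing.Theory Num.Theory.
Local Open Scope ring_scope.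

(* Perturb the weights to [w i + eps * 2^i], which adds [eps * bincode S] to
   the weight of every coalition [S]; the binary code [bincode S] is injective
   and below [2^n].  If [eps * 2^n] is smaller than every positive gap
   [q - w(S)] (S losing) and [w(C') - w(C)], then no coalition changes its
   value and no strict inequality between coalition weights is reversed,
   while ties are broken by the codes. *)

Lemma sum_pow2_recr (P : pred nat) m :
  (\sum_(j < m.+1 | P j) 2 ^ j = \sum_(j < m | P j) 2 ^ j + P m * 2 ^ m)%N.
Proof.
by rewrite big_mkcond big_ord_recr /= -big_mkcond; case: (P m); rewrite ?mul1n ?addn0.
Qed.

Lemma sum_pow2_lt (P : pred nat) m : (\sum_(j < m | P j) 2 ^ j < 2 ^ m)%N.
Proof.
elim: m => [|m IHm]; first by rewrite big_ord0.
by rewrite sum_pow2_recr expnS; move: IHm; case: (P m) => /=; lia.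
Qed.

Lemma sum_pow2_inj (P Q : pred nat) m :
  (\sum_(j < m | P j) 2 ^ j = \sum_(j < m | Q j) 2 ^ j)%N ->
  forall i, (i < m)%N -> P i = Q i.
Proof.
elim: m => [|m IHm] + i //; rewrite !sum_pow2_recr.
have := sum_pow2_lt P m; have := sum_pow2_lt Q m.
move: (\sum_(j < m | P j) _)%N (\sum_(j < m | Q j) _)%N IHm => sP sQ IHm ltQ ltP E.
have eqPQm : P m = Q m by case: (P m) (Q m) E => -[] //= E; exfalso; lia.
rewrite eqPQm in E; have /IHm eqPQ : sP = sQ by lia.
by rewrite ltnS leq_eqVlt => /orP[/eqP-> | /eqPQ].
Qed.

Definition bincode n (S : {set 'I_n}) : nat := (\sum_(i in S) 2 ^ i)%N.

Lemma bincodeE n (S : {set 'I_n}) :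
  bincode S = (\sum_(j < n | (j : nat) \in map (@nat_of_ord n) (enum S)) 2 ^ j)%N.
Proof. by apply: eq_bigl => j; rewrite (mem_map (@ord_inj n)) mem_enum. Qed.

Lemma bincode_lt n (S : {set 'I_n}) : (bincode S < 2 ^ n)%N.
Proof. by rewrite bincodeE sum_pow2_lt. Qed.

Lemma bincode_inj n : injective (@bincode n).
Proof.
move=> S S'; rewrite !bincodeE => /sum_pow2_inj eqSS'; apply/setP => i.
by rewrite -[i \in S]mem_enum -[i \in S']mem_enum -!(mem_map (@ord_inj n)); apply: eqSS'.
Qed.

Lemma exists_pos_lbound (R : realDomainType) (T : finType) (P : pred T)
    (f : T -> R) :
  (forall x, P x -> 0 < f x) -> exists2 e : R, 0 < e & forall x, P x -> e <= f x.
Proof.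
move=> f_gt0; exists (\big[Order.min/1]_(x | P x) f x).
  by apply: (big_ind (fun x => 0 < x)) => // x y; rewrite lt_min => -> ->.
by move=> x Px; rewrite (bigD1 x) //= ge_min lexx.
Qed.

Section Perturbation.

Variables (R : realType) (n : nat) (w : 'I_n -> R) (e : R).

Definition perturb (i : 'I_n) : R := w i + e * (2 ^ i)%:R.

Let N : R := (2 ^ n)%:R.

Lemma sum_perturb (S : {set 'I_n}) :
  \sum_(i in S) perturb i = \sum_(i in S) w i + e * (bincode S)%:R.
Proof. by rewrite big_split /= -mulr_sumr /bincode natr_sum. Qed.

Lemma bincode_le (S : {set 'I_n}) : (bincode S)%:R <= N.
Proof. by rewrite ler_nat ltnW // bincode_lt. Qed.

Lemma scaled_bincode_bounds (S : {set 'I_n}) :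
  0 <= e -> 0 <= e * (bincode S)%:R <= e * N.
Proof. by move=> e_ge0; rewrite mulr_ge0 //= ler_wpM2l // bincode_le. Qed.

Lemma perturb_weighted_rep (v : {set 'I_n} -> bool) (q : R) :
  weighted_rep v q w -> 0 <= e ->
  (forall S, ~~ v S -> e * N < q - \sum_(i in S) w i) ->
  weighted_rep v q perturb.
Proof.
move=> [q_ge0 [w_ge0 hv]] e_ge0 gap; split=> //; split.
  by move=> i; rewrite addr_ge0 // mulr_ge0.
move=> S; rewrite sum_perturb.
have /andP[code_ge0 code_le] := scaled_bincode_bounds S e_ge0.
split=> [/hv | le_q]; first lra.
by apply/hv; have [/hv // | /gap] := boolP (v S); lra.
Qed.

Lemma perturb_sums_neq : 0 < e ->
  (forall C C' : {set 'I_n}, \sum_(i in C) w i < \sum_(i in C') w i ->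
     e * N < \sum_(i in C') w i - \sum_(i in C) w i) ->
  forall C C' : {set 'I_n}, C <> C' ->
    \sum_(i in C) perturb i <> \sum_(i in C') perturb i.
Proof.
move=> e_gt0 gap C C' neCC'; rewrite !sum_perturb => eq_sums.
have /andP[codeC_ge0 codeC_le] := scaled_bincode_bounds C (ltW e_gt0).
have /andP[codeC'_ge0 codeC'_le] := scaled_bincode_bounds C' (ltW e_gt0).
case: (ltgtP (\sum_(i in C) w i) (\sum_(i in C') w i)) => [/gap | /gap | eqw].
1, 2: lra.
have /eqP : e * (bincode C)%:R = e * (bincode C')%:R by lra.
rewrite (inj_eq (mulfI (lt0r_neq0 e_gt0))) eqr_nat => /eqP /bincode_inj.
exact: neCC'.
Qed.

End Perturbation.

Theorem lemma6 (R : realType) (n : nat) (v : {set 'I_n} -> bool) :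
  weighted_voting_game R v ->
  exists (q : R) (w : 'I_n -> R),
    weighted_rep v q w /\
    (forall C C' : {set 'I_n}, C <> C' -> v C = true -> v C' = true ->
       \sum_(i in C) w i <> \sum_(i in C') w i).
Proof.
move=> [q [w rep]]; have [_ [_ hv]] := rep.
have [g1 g1_gt0 g1_le] : exists2 g : R, 0 < g &
    forall S, ~~ v S -> g <= q - \sum_(i in S) w i.
  apply: (@exists_pos_lbound _ _ (fun S => ~~ v S)) => S.
  by rewrite subr_gt0 ltNge; apply: contraNN => /hv.
have [g2 g2_gt0 g2_le] : exists2 g : R, 0 < g &
    forall p : {set 'I_n} * {set 'I_n}, \sum_(i in p.1) w i < \sum_(i in p.2) w i ->
      g <= \sum_(i in p.2) w i - \sum_(i in p.1) w i.
  by apply: (@exists_pos_lbound _ _ (fun p => _ < _)) => p; rewrite subr_gt0.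
pose N : R := (2 ^ n)%:R.
pose e := Num.min g1 g2 / (2 * N).
have N_gt0 : 0 < N by rewrite ltr0n expn_gt0.
have min_gt0 : 0 < Num.min g1 g2 by rewrite lt_min g1_gt0.
have e_gt0 : 0 < e by rewrite divr_gt0 ?mulr_gt0.
have eN : e * N = Num.min g1 g2 / 2 by rewrite /e; field; rewrite gt_eqF.
have [min_le1 min_le2] : Num.min g1 g2 <= g1 /\ Num.min g1 g2 <= g2.
  by rewrite !ge_min !lexx orbT.
exists q, (perturb w e); split.
  apply: perturb_weighted_rep => // [|S /g1_le]; first exact: ltW.
  by rewrite eN; lra.
move=> C C' neCC' _ _; apply: perturb_sums_neq => // D D' /(g2_le (D, D')) /=.
by rewrite eN; lra.
Qed.
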